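(* Let $A\in\mathbb{C}^{m\times n}$ and $B\in\mathbb{C}^{n\times p}$. Then each of the following sets of matrices is contained in $\{(AB)^{(1)}\}$: $$\{(A^{(1)}AB)^{(1)}A^{(1)}\},\quad \{B^{(1)}(ABB^{(1)})^{(1)}\},\quad \{(A^{*}AB)^{(1)}A^{*}\},\quad \{B^{*}(ABB^{*})^{(1)}\},\quad \{(AA^{*}AB)^{(1)}AA^{*}\},$$ $$\{B^{*}B(ABB^{*}B)^{(1)}\},\quad \{B^{(1)}(A^{(1)}ABB^{(1)})^{(1)}A^{(1)}\},\quad \{B^{*}(A^{*}ABB^{*})^{(1)}A^{*}\},\quad \{B^{*}B(AA^{*}ABB^{*}B)^{(1)}AA^{*}\}.$$
   Context: For a complex matrix $X$, $X^*$ is its conjugate transpose, $r(X)$ its rank and $\mathscr{R}(X)$ its column space. For $X\in\mathbb{C}^{p\times q}$, a matrix $G\in\mathbb{C}^{q\times p}$ is called an $\{i,\ldots,j\}$-generalized inverse of $X$ (written $X^{(i,\ldots,j)}$) if it satisfies the equations numbered $i,\ldots,j$ among the four Penrose equations (i) $XGX=X$, (ii) $GXG=G$, (iii) $(XG)^*=XG$, (iv) $(GX)^*=GX$; $\{X^{(i,\ldots,j)}\}$ denotes the set of all such $G$. The Moore–Penrose inverse $X^\dagger$ is the unique matrix satisfying all four equations. For a matrix expression involving generalized inverses, $\{\cdot\}$ denotes the set of all values of the expression as each generalized inverse occurring in it ranges over all admissible choices; repeated occurrences of the same symbol (e.g. $A^{(1)}$ appearing twice) denote one and the same choice, and a generalized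 inverse of a matrix that itself contains a chosen generalized inverse is taken with respect to that chosen matrix. *)

(* Complex matrices are modelled over an arbitrary
   numClosedFieldType C (algebraically closed field with conjugation,
   e.g. the complex numbers); this is a generalization of C = complex. *)
From HB Require Import structures.
From mathcomp Require Import all_boot all_order all_algebra.
Set Implicit Arguments. Unset Strict Implicit. Unset Printing Implicit Defensive.
Import Order.TTheory GRing.Theory Num.Theory.
Local Open Scope ring_scope.

Definition ctmx (C : numClosedFieldType) (p q : nat) (X : 'M[C]_(p, q)) : 'M[C]_(q, p) :=
  (map_mx (fun x => x^*) X)^T.

Definition g1inv (C : numClosedFieldType) (p q : nat)
  (X : 'M[C]_(p, q)) (G : 'M[C]_(q, p)) : Prop :=
  X *m G *m X = X.

From HB Require Import structures.
From mathcomp Require Import all_boot all_order all_algebra.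
Import Order.TTheory GRing.Theory Num.Theory.
Local Open Scope ring_scope.

(** Each of the nine matrices has the shape [R X L], where [X] is a
   {1}-inverse of [L A B R] and [L] (resp. [R]) is one of [A^(1)], [A^*],
   [A A^*] (resp. [B^(1)], [B^*], [B^* B]) or absent.  In every case
   [L A Y = L A Z] forces [A Y = A Z] and [Y B R = Z B R] forces [Y B = Z B]:
   for {1}-inverses multiply by [A] (resp. [B]), and for [A^*] use that
   [A^* D = 0] with [D = A (Y - Z)] gives [D^* D = 0], hence [D = 0].
   Cancelling [L A] and [B R] in [(L A B R) X (L A B R) = L A B R] then
   yields [A B (R X L) A B = A B]. *)

Section ConjugateTranspose.
Context {C : numClosedFieldType}.

Lemma ctmxM {a b c : nat} (X : 'M[C]_(a, b)) (Y : 'M[C]_(b, c)) :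
  ctmx (X *m Y) = ctmx Y *m ctmx X.
Proof.
rewrite /ctmx -trmx_mul; congr (_^T); apply/matrixP=> i j.
by rewrite !mxE rmorph_sum; apply: eq_bigr => k _; rewrite !mxE rmorphM.
Qed.

Lemma ctmxK {a b : nat} : cancel (@ctmx C a b) (@ctmx C b a).
Proof. by move=> X; apply/matrixP=> i j; rewrite !mxE conjCK. Qed.

Lemma ctmx_mul_eq0 {a b : nat} (D : 'M[C]_(a, b)) : ctmx D *m D = 0 -> D = 0.
Proof.
move=> DD0; apply/matrixP=> i j; rewrite mxE.
have := congr1 (fun M : 'M[C]_b => M j j) DD0; rewrite !mxE => sum0.
have /psumr_eq0P norm0 : \sum_(k < a) D k j * (D k j)^* = 0.
  by rewrite -[RHS]sum0; apply: eq_bigr => k _; rewrite !mxE mulrC.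
by apply/eqP; rewrite -mul_conjC_eq0 norm0 // => k _; apply: mul_conjC_ge0.
Qed.

End ConjugateTranspose.

Section Cancellation.
Context {C : numClosedFieldType}.
Implicit Types k m n p : nat.

Definition lcancels {k m n} (L : 'M[C]_(k, m)) (A : 'M[C]_(m, n)) : Prop :=
  forall c (Y Z : 'M[C]_(n, c)), L *m A *m Y = L *m A *m Z -> A *m Y = A *m Z.

Definition rcancels {k n p} (B : 'M[C]_(n, p)) (R : 'M[C]_(p, k)) : Prop :=
  forall c (Y Z : 'M[C]_(c, n)), Y *m B *m R = Z *m B *m R -> Y *m B = Z *m B.

Lemma lcancels_g1inv {m n} (A : 'M[C]_(m, n)) (A1 : 'M[C]_(n, m)) :
  g1inv A A1 -> lcancels A1 A.
Proof. by move=> AA1A c Y Z /(congr1 (mulmx A)); rewrite !mulmxA AA1A. Qed.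

Lemma rcancels_g1inv {n p} (B : 'M[C]_(n, p)) (B1 : 'M[C]_(p, n)) :
  g1inv B B1 -> rcancels B B1.
Proof.
move=> BB1B c Y Z /(congr1 (mulmx^~ B)).
by rewrite -!mulmxA !(mulmxA B) BB1B.
Qed.

Lemma lcancels_ctmx {m n} (A : 'M[C]_(m, n)) : lcancels (ctmx A) A.
Proof.
move=> c Y Z eqAA; apply/eqP; rewrite -subr_eq0 -mulmxBr; apply/eqP.
apply: ctmx_mul_eq0.
by rewrite ctmxM -mulmxA (mulmxA (ctmx A)) mulmxBr eqAA subrr mulmx0.
Qed.

Lemma rcancels_ctmx {n p} (B : 'M[C]_(n, p)) : rcancels B (ctmx B).
Proof.
move=> c Y Z eqBB; apply: (can_inj (@ctmxK C c p)); rewrite !ctmxM.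
by apply: (lcancels_ctmx (ctmx B)); rewrite -!ctmxM !mulmxA eqBB.
Qed.

Lemma lcancels_mx_ctmx {m n} (A : 'M[C]_(m, n)) : lcancels (A *m ctmx A) A.
Proof.
move=> c Y Z eqAAA; apply: lcancels_ctmx; rewrite -!mulmxA.
by apply: (lcancels_ctmx (ctmx A)); rewrite ctmxK !mulmxA.
Qed.

Lemma rcancels_ctmx_mx {n p} (B : 'M[C]_(n, p)) : rcancels B (ctmx B *m B).
Proof.
move=> c Y Z eqBBB; apply: rcancels_ctmx.
by apply: (rcancels_ctmx (ctmx B)); rewrite ctmxK; move: eqBBB; rewrite !mulmxA.
Qed.

Lemma g1inv_mul_cancel {k l m n p} {A : 'M[C]_(m, n)} {B : 'M[C]_(n, p)}
    {L : 'M[C]_(k, m)} {R : 'M[C]_(p, l)} :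
  lcancels L A -> rcancels B R ->
  forall X : 'M[C]_(l, k), g1inv (L *m A *m B *m R) X -> g1inv (A *m B) (R *m X *m L).
Proof.
move=> cancelL cancelR X; rewrite /g1inv !mulmxA => eqX.
have eqXB : L *m A *m B *m R *m X *m L *m A *m B = L *m A *m B.
  exact: cancelR.
by move: (cancelL _ (B *m R *m X *m L *m A *m B) B); rewrite !mulmxA eqXB; apply.
Qed.

End Cancellation.

Theorem theorem3p1 (C : numClosedFieldType) (m n p : nat)
  (A : 'M[C]_(m, n)) (B : 'M[C]_(n, p)) :
  (forall (A1 : 'M[C]_(n, m)) (X : 'M[C]_(p, n)),
     g1inv A A1 -> g1inv (A1 *m A *m B) X -> g1inv (A *m B) (X *m A1)) /\
  (forall (B1 : 'M[C]_(p, n)) (X : 'M[C]_(n, m)),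
     g1inv B B1 -> g1inv (A *m B *m B1) X -> g1inv (A *m B) (B1 *m X)) /\
  (forall (X : 'M[C]_(p, n)),
     g1inv (ctmx A *m A *m B) X -> g1inv (A *m B) (X *m ctmx A)) /\
  (forall (X : 'M[C]_(n, m)),
     g1inv (A *m B *m ctmx B) X -> g1inv (A *m B) (ctmx B *m X)) /\
  (forall (X : 'M[C]_(p, m)),
     g1inv (A *m ctmx A *m A *m B) X -> g1inv (A *m B) (X *m A *m ctmx A)) /\
  (forall (X : 'M[C]_(p, m)),
     g1inv (A *m B *m ctmx B *m B) X -> g1inv (A *m B) (ctmx B *m B *m X)) /\
  (forall (A1 : 'M[C]_(n, m)) (B1 : 'M[C]_(p, n)) (X : 'M[C]_(n, n)),
     g1inv A A1 -> g1inv B B1 -> g1inv (A1 *m A *m B *m B1) X ->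
     g1inv (A *m B) (B1 *m X *m A1)) /\
  (forall (X : 'M[C]_(n, n)),
     g1inv (ctmx A *m A *m B *m ctmx B) X ->
     g1inv (A *m B) (ctmx B *m X *m ctmx A)) /\
  (forall (X : 'M[C]_(p, m)),
     g1inv (A *m ctmx A *m A *m B *m ctmx B *m B) X ->
     g1inv (A *m B) (ctmx B *m B *m X *m A *m ctmx A)).
Proof.
have cancelL k (L : 'M[C]_(k, m)) : lcancels L A ->
    forall X : 'M[C]_(p, k), g1inv (L *m A *m B) X -> g1inv (A *m B) (X *m L).
  move=> lL X eqX; have cancel1 : rcancels B 1%:M by move=> c Y Z; rewrite !mulmx1.
  by rewrite -[X]mul1mx; apply: g1inv_mul_cancel lL cancel1 _ _; rewrite mulmx1.
have cancelR k (R : 'M[C]_(p, k)) : rcancels B R ->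
    forall X : 'M[C]_(k, m), g1inv (A *m B *m R) X -> g1inv (A *m B) (R *m X).
  move=> rR X eqX; have cancel1 : lcancels 1%:M A by move=> c Y Z; rewrite !mul1mx.
  by rewrite -[R *m X]mulmx1; apply: g1inv_mul_cancel cancel1 rR _ _; rewrite mul1mx.
split; [|split; [|split; [|split; [|split; [|split; [|split; [|split]]]]]]].
- by move=> A1 X /lcancels_g1inv /cancelL; apply.
- by move=> B1 X /rcancels_g1inv /cancelR; apply.
- exact: cancelL (lcancels_ctmx A).
- exact: cancelR (rcancels_ctmx B).
- by move=> X; rewrite -(mulmxA X); apply: cancelL (lcancels_mx_ctmx A) X.
- by move=> X; rewrite -(mulmxA _ (ctmx B) B); apply: cancelR (rcancels_ctmx_mx B) X.
- move=> A1 B1 X /lcancels_g1inv cancelA /rcancels_g1inv cancelB.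
  exact: g1inv_mul_cancel cancelA cancelB X.
- exact: g1inv_mul_cancel (lcancels_ctmx A) (rcancels_ctmx B).
- move=> X; rewrite -(mulmxA _ (ctmx B) B) -(mulmxA _ A (ctmx A)).
  exact: g1inv_mul_cancel (lcancels_mx_ctmx A) (rcancels_ctmx_mx B) X.
Qed.
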